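(* Let $\Phi$ be a homogeneous $\Sigma\Pi\Sigma$ circuit over a set of variables $X$ and a field $\mathbb{F}$, with top fan-in $k$, computing a homogeneous polynomial $f$ of degree $d$. Then for any partition $A:X\to Y\cup Z$, $\mathrm{maxrank}(M_{\Phi^A})\le k\cdot 2^d$.
   Context: A $\Sigma\Pi\Sigma$ circuit computes $\sum_{i=1}^k\prod_{j=1}^{\deg(P_i)}l_{i,j}$ (a top plus gate of fan-in $k$ over product gates $P_i$ whose inputs are outputs $l_{i,j}$ of bottom plus gates); it is homogeneous if every $l_{i,j}$ is a homogeneous linear form. $Y,Z$ are disjoint sets of variables and a partition is a map $A:X\to Y\cup Z$; $\Phi^A$ is the circuit obtained by replacing every variable $x$ by $A(x)$, and $M_{\Phi^A}$ is the polynomial coefficient matrix of the polynomial it computes (namely $f^A$). For $g\in\mathbb{F}[Y,Z]$, $M_g$ has rows indexed by monic multilinear monomials $p$ in $Y$ and columns by monic multilinear monomials $q$ in $Z$, with $M_g(p,q)=G$ iff $g=pq\,G+Q$ uniquely with $G$ containing only variables present in $p,q$ and $Q$ having no monomial divisible by $pq$ that contains only variables present in $p,q$. $\mathrm{maxrank}(M_g)=\max_{S:Y\cup Z\to\mathbb{F}}\mathrm{rank}(M_g|_S)$, where $M_g|_S$ evaluates entries at $S$. *)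

From HB Require Import structures.
From mathcomp Require Import all_boot all_order all_algebra.
From mathcomp Require Export mpoly.
Set Implicit Arguments. Unset Strict Implicit. Unset Printing Implicit Defensive.
Import GRing.Theory.
Local Open Scope ring_scope.

(* A bottom plus gate over variables 'I_n: constant term and coefficients,
   computing  c0 + sum_x c_x * x. *)
Definition linform (F : fieldType) (n : nat) := (F * {ffun 'I_n -> F})%type.

(* A SigmaPiSigma circuit: the top plus gate has fan-in (size Phi);
   each entry is a product gate P_i given as the list of its input linear
   forms l_{i,1}, ..., l_{i,deg P_i}. *)
Definition circuit (F : fieldType) (n : nat) := seq (seq (linform F n)).

Definition topfanin F n (Phi : circuit F n) : nat := size Phi.

Definition lin_poly F n (l : linform F n) : {mpoly F[n]} :=
  l.1%:MP + \sum_(x < n) l.2 x *: 'X_x.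

Definition circuit_poly F n (Phi : circuit F n) : {mpoly F[n]} :=
  \sum_(P <- Phi) \prod_(l <- P) lin_poly l.

Definition homogeneous_circuit F n (Phi : circuit F n) : bool :=
  all (all (fun l : linform F n => l.1 == 0)) Phi.

(* Phi^A : replace every variable x by A x (variables Y u Z = 'I_(p+q),
   Y = left part 'I_p, Z = right part 'I_q). *)
Definition subst_circuit F n m (A : 'I_n -> 'I_m) (Phi : circuit F n)
  : circuit F m :=
  map (map (fun l : linform F n =>
     (l.1, [ffun y : 'I_m => \sum_(x < n | A x == y) l.2 x]))) Phi.

Definition varsYZ p q (S : {set 'I_p}) (T : {set 'I_q}) : {set 'I_(p + q)} :=
  [set lshift q i | i in S] :|: [set rshift p j | j in T].

(* M_g(S,T) for the monic multilinear monomials prod S (in Y) and prod T (in Z):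
   the unique G with g = (prod S)(prod T) G + Q, G only in variables of S u T,
   Q with no monomial divisible by (prod S)(prod T) using only those variables.
   Explicitly: the monomials of g whose variable set is exactly U = S u T,
   each divided by prod U. *)
Definition Mentry F p q (g : {mpoly F[p + q]}) (S : {set 'I_p}) (T : {set 'I_q})
  : {mpoly F[p + q]} :=
  let U := varsYZ S T in
  \sum_(m <- msupp g | [forall i, (m i != 0%N) == (i \in U)])
     g@_m *: 'X_[[multinom (m i).-1 | i < p + q]].

Definition coefmx F p q (g : {mpoly F[p + q]})
  : 'M[{mpoly F[p + q]}]_(#|{set 'I_p}|, #|{set 'I_q}|) :=
  \matrix_(i, j) Mentry g (enum_val i) (enum_val j).

Definition coefmx_eval F p q (g : {mpoly F[p + q]}) (s : 'I_(p + q) -> F)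
  : 'M[F]_(#|{set 'I_p}|, #|{set 'I_q}|) :=
  map_mx (fun G => G.@[s]) (coefmx g).

From mathcomp Require Import all_boot all_order all_algebra.
From mathcomp Require Import mpoly ssrcomplements.
Set Implicit Arguments. Unset Strict Implicit. Unset Printing Implicit Defensive.
Import GRing.Theory.
Local Open Scope ring_scope.

(* The evaluated coefficient matrix M_g|_s is linear in g.  If g = gY * gZ,
   with gY a polynomial in the Y-variables and gZ one in the Z-variables, then
   its (S, T) entry factors into a part depending only on S times a part
   depending only on T, so M_g|_s has rank at most 1.  Splitting every linear
   form of a product gate of degree e into its Y-part and its Z-part expands
   the gate into 2^e such products.  Finally, as f is d-homogeneous, the gates
   of degree other than d cancel in f, hence also in f^A, so at most k gates of
   degree d contribute, each with rank at most 2^d. *)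

Lemma mxrank_sum_le (F : fieldType) m n (I : Type) (r : seq I) (P : pred I)
    (M : I -> 'M[F]_(m, n)) c :
  (forall i, P i -> (mxrank (M i) <= c)%N) ->
  (mxrank (\sum_(i <- r | P i) M i)%R <= size r * c)%N.
Proof.
move=> le_Mc; elim: r => [|i r IH]; first by rewrite big_nil mxrank0.
rewrite big_cons mulSn; case: ifP => Pi.
  by apply: leq_trans (mxrank_add _ _) _; rewrite leq_add ?le_Mc.
exact: leq_trans IH (leq_addl _ _).
Qed.

Section CoefMatrixEvaluation.
Variables (F : fieldType) (p q : nat) (s : 'I_(p + q) -> F).
Local Notation rows := #|{set 'I_p}|.
Local Notation cols := #|{set 'I_q}|.

Definition monomial_mx (m : 'X_{1..p + q}) : 'M[F]_(rows, cols) :=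
  \matrix_(i, j)
    (if [forall x, (m x != 0%N) == (x \in varsYZ (enum_val i) (enum_val j))]
     then ('X_[[multinom (m x).-1 | x < p + q]] : {mpoly F[p + q]}).@[s]
     else 0).

Lemma coefmx_evalE g :
  coefmx_eval g s = \sum_(m <- msupp g) g@_m *: monomial_mx m.
Proof.
apply/matrixP => i j; rewrite !mxE summxE /Mentry raddf_sum /= big_mkcond /=.
apply: eq_bigr => m _; rewrite !mxE; case: ifP => _; last by rewrite mulr0.
by rewrite mevalZ.
Qed.

Lemma coefmx_evalwE k g : (msize g <= k)%N ->
  coefmx_eval g s = \sum_(m : 'X_{1..(p + q) < k}) g@_m *: monomial_mx m.
Proof.
move=> le_gk; pose I : subFinType _ := 'X_{1..(p + q) < k}.
rewrite coefmx_evalE (big_mksub I) ?msupp_uniq //=.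
  by rewrite big_rmcond //= => m /memN_msupp_eq0 ->; rewrite scale0r.
by move=> m /msize_mdeg_lt /leq_trans; apply.
Qed.

Lemma coefmx_eval_is_linear :
  linear (fun g : {mpoly F[p + q]} => coefmx_eval g s).
Proof.
move=> c g h /=; pose k := (msize g + msize h + msize (c *: g + h))%N.
have le_g : (msize g <= k)%N by rewrite /k -addnA leq_addr.
have le_h : (msize h <= k)%N by rewrite /k addnAC leq_addl.
rewrite !(@coefmx_evalwE k) ?leq_addl // scaler_sumr -big_split /=.
by apply: eq_bigr => m _; rewrite linearP /= scalerDl scalerA.
Qed.

Lemma coefmx_eval0 : coefmx_eval 0 s = 0.
Proof. by rewrite coefmx_evalE msupp0 big_nil. Qed.

Lemma coefmx_evalD g h : coefmx_eval (g + h) s = coefmx_eval g s + coefmx_eval h s.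
Proof. by have := coefmx_eval_is_linear 1 g h; rewrite !scale1r. Qed.

Lemma coefmx_evalZ c g : coefmx_eval (c *: g) s = c *: coefmx_eval g s.
Proof. by have := coefmx_eval_is_linear c g 0; rewrite coefmx_eval0 !addr0. Qed.

Lemma coefmx_eval_sum (I : Type) (r : seq I) (P : pred I) (G : I -> {mpoly F[p + q]}) :
  coefmx_eval (\sum_(i <- r | P i) G i) s = \sum_(i <- r | P i) coefmx_eval (G i) s.
Proof. exact: (big_morph _ coefmx_evalD coefmx_eval0). Qed.

Lemma coefmx_evalX m : coefmx_eval 'X_[m] s = monomial_mx m.
Proof. by rewrite coefmx_evalE msuppX big_seq1 mcoeffX eqxx scale1r. Qed.

End CoefMatrixEvaluation.

Section VariablesWithin.
Variables (R : nzRingType) (n : nat) (V : {set 'I_n}).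
Implicit Types (g h : {mpoly R[n]}) (m : 'X_{1..n}).

Definition mnm_within m := [forall i, (i \notin V) ==> (m i == 0%N)].

Definition mpoly_within g := all mnm_within (msupp g).

Lemma mnm_withinP m : reflect (forall i, i \notin V -> m i = 0%N) (mnm_within m).
Proof. by apply: (iffP forall_inP) => [H i /H/eqP | H i /H->]. Qed.

Lemma mpoly_within1 : mpoly_within 1.
Proof. by rewrite /mpoly_within msupp1 /= andbT; apply/mnm_withinP => i; rewrite mnm0E. Qed.

Lemma mpoly_withinX i : i \in V -> mpoly_within 'X_i.
Proof.
move=> Vi; rewrite /mpoly_within msuppX /= andbT; apply/mnm_withinP => j Vj.
by rewrite mnm1E; case: eqP Vj => // <-; rewrite Vi.
Qed.

Lemma mpoly_withinD g h : mpoly_within g -> mpoly_within h -> mpoly_within (g + h).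
Proof.
move=> /allP Wg /allP Wh; apply/allP => m /msuppD_le.
by rewrite mem_cat => /orP[/Wg|/Wh].
Qed.

Lemma mpoly_withinZ c g : mpoly_within g -> mpoly_within (c *: g).
Proof. by move=> /allP Wg; apply/allP => m /msuppZ_le /Wg. Qed.

Lemma mpoly_withinM g h : mpoly_within g -> mpoly_within h -> mpoly_within (g * h).
Proof.
move=> /allP Wg /allP Wh; apply/allP => m /msuppM_le /allpairsP[[m1 m2] /= [m1g m2h ->]].
move: (Wg _ m1g) (Wh _ m2h) => /mnm_withinP W1 /mnm_withinP W2.
by apply/mnm_withinP => i Vi; rewrite mnmDE W1 ?W2.
Qed.

Lemma mpoly_within_sum (I : Type) (r : seq I) (P : pred I) (G : I -> {mpoly R[n]}) :
  (forall i, P i -> mpoly_within (G i)) -> mpoly_within (\sum_(i <- r | P i) G i).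
Proof.
move=> W; apply: (big_ind mpoly_within) => //; last exact: mpoly_withinD.
by rewrite /mpoly_within msupp0.
Qed.

End VariablesWithin.

Lemma lin_poly_split (F : fieldType) n (V : {set 'I_n}) (l : linform F n) :
  l.1 = 0 -> exists gV gW,
    [/\ mpoly_within V gV, mpoly_within (~: V) gW & lin_poly l = gV + gW].
Proof.
move=> l0; exists (\sum_(x in V) l.2 x *: 'X_x), (\sum_(x in ~: V) l.2 x *: 'X_x).
split; do ?by apply: mpoly_within_sum => x Vx; apply/mpoly_withinZ/mpoly_withinX.
rewrite /lin_poly l0 mpolyC0 add0r (bigID (mem V)) /=.
by congr (_ + _); apply: eq_bigl => x; rewrite inE.
Qed.

Definition gate_poly (F : fieldType) n (P : seq (linform F n)) : {mpoly F[n]} :=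
  \prod_(l <- P) lin_poly l.

Section RankOfProducts.
Variables (F : fieldType) (p q : nat) (s : 'I_(p + q) -> F).
Local Notation rows := #|{set 'I_p}|.
Local Notation cols := #|{set 'I_q}|.

Definition Yvars : {set 'I_(p + q)} := [set lshift q i | i : 'I_p].

Lemma lshift_in_Yvars i : lshift q i \in Yvars.
Proof. exact: imset_f. Qed.

Lemma rshift_notin_Yvars j : rshift p j \notin Yvars.
Proof. by apply/imsetP => -[i _ /eqP]; rewrite eq_rlshift. Qed.

Lemma mem_varsYZ_lshift (S : {set 'I_p}) (T : {set 'I_q}) i :
  (lshift q i \in varsYZ S T) = (i \in S).
Proof.
rewrite /varsYZ in_setU (mem_imset _ _ (@lshift_inj p q)).
by case: imsetP => [[j _ /eqP]|]; rewrite ?eq_lrshift ?orbF.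
Qed.

Lemma mem_varsYZ_rshift (S : {set 'I_p}) (T : {set 'I_q}) j :
  (rshift p j \in varsYZ S T) = (j \in T).
Proof.
rewrite /varsYZ in_setU (mem_imset _ _ (@rshift_inj p q)).
by case: imsetP => [[i _ /eqP]|]; rewrite ?eq_rlshift.
Qed.

Definition Ycol (m : 'X_{1..p + q}) : 'cV[F]_rows :=
  \col_i (if [forall x, (m (lshift q x) != 0%N) == (x \in (enum_val i : {set 'I_p}))]
          then \prod_(x < p) s (lshift q x) ^+ (m (lshift q x)).-1 else 0).

Definition Zrow (m : 'X_{1..p + q}) : 'rV[F]_cols :=
  \row_j (if [forall y, (m (rshift p y) != 0%N) == (y \in (enum_val j : {set 'I_q}))]
          then \prod_(y < q) s (rshift p y) ^+ (m (rshift p y)).-1 else 0).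

Lemma monomial_mxD_YZ m1 m2 :
  mnm_within Yvars m1 -> mnm_within (~: Yvars) m2 ->
  monomial_mx s (m1 + m2) = Ycol m1 *m Zrow m2.
Proof.
move=> /mnm_withinP W1 /mnm_withinP W2.
have eL i : (m1 + m2)%MM (lshift q i) = m1 (lshift q i).
  by rewrite mnmDE W2 ?addn0 // inE negbK lshift_in_Yvars.
have eR j : (m1 + m2)%MM (rshift p j) = m2 (rshift p j).
  by rewrite mnmDE W1 // rshift_notin_Yvars.
apply/matrixP => i j; rewrite !mxE big_ord1 !mxE.
set cY := [forall x : 'I_p, _]; set cZ := [forall y : 'I_q, _].
have -> : [forall x, ((m1 + m2)%MM x != 0%N) == (x \in varsYZ (enum_val i) (enum_val j))]
    = cY && cZ.
  apply/forallP/andP => [E | [/forallP EY /forallP EZ] x].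
    split; apply/forallP => x.
      by have := E (lshift q x); rewrite eL mem_varsYZ_lshift.
    by have := E (rshift p x); rewrite eR mem_varsYZ_rshift.
  case: (split_ordP x) => y ->; first by rewrite eL mem_varsYZ_lshift.
  by rewrite eR mem_varsYZ_rshift.
rewrite mevalX big_split_ord /=.
under eq_bigr do rewrite mnmE eL.
under [X in _ * X]eq_bigr do rewrite mnmE eR.
by case: cY; case: cZ; rewrite /= ?mulr0 ?mul0r.
Qed.

Lemma mxrank_coefmx_eval_mulYZ gY gZ :
  mpoly_within Yvars gY -> mpoly_within (~: Yvars) gZ ->
  (\rank (coefmx_eval (gY * gZ) s) <= 1)%N.
Proof.
move=> /allP WY /allP WZ.
suff -> : coefmx_eval (gY * gZ) s =
    (\sum_(m1 <- msupp gY) gY@_m1 *: Ycol m1) *m (\sum_(m2 <- msupp gZ) gZ@_m2 *: Zrow m2).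
  exact: leq_trans (mxrankM_maxl _ _) (rank_leq_col _).
rewrite {1}(mpolyE gY) {1}(mpolyE gZ) big_distrl coefmx_eval_sum mulmx_suml.
apply: eq_big_seq => m1 m1Y; rewrite big_distrr coefmx_eval_sum mulmx_sumr.
apply: eq_big_seq => m2 m2Z /=; rewrite -scalerAl -scalerAr -mpolyXD !coefmx_evalZ.
by rewrite coefmx_evalX monomial_mxD_YZ ?WY ?WZ // -scalemxAl -scalemxAr.
Qed.

Lemma mxrank_coefmx_eval_mul_gate gY gZ (P : seq (linform F (p + q))) :
  mpoly_within Yvars gY -> mpoly_within (~: Yvars) gZ ->
  all (fun l : linform F (p + q) => l.1 == 0) P ->
  (\rank (coefmx_eval (gY * gZ * gate_poly P) s) <= 2 ^ size P)%N.
Proof.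
elim: P gY gZ => [|l P IH] gY gZ WY WZ /=.
  by rewrite /gate_poly big_nil mulr1 => _; apply: mxrank_coefmx_eval_mulYZ.
rewrite /gate_poly big_cons => /andP[/eqP/(lin_poly_split Yvars)[lY [lZ [WlY WlZ ->]]] homP].
rewrite mulrDl mulrDr coefmx_evalD expnS mul2n -addnn.
apply: leq_trans (mxrank_add _ _) (leq_add _ _).
  by rewrite mulrA [gY * gZ * lY]mulrAC; apply: IH; rewrite ?mpoly_withinM.
by rewrite mulrA -(mulrA gY); apply: IH; rewrite ?mpoly_withinM.
Qed.

Lemma mxrank_coefmx_eval_gate (P : seq (linform F (p + q))) :
  all (fun l : linform F (p + q) => l.1 == 0) P ->
  (\rank (coefmx_eval (gate_poly P) s) <= 2 ^ size P)%N.
Proof.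
move=> homP; have W1 V : mpoly_within V (1 : {mpoly F[p + q]}) by apply: mpoly_within1.
by have := mxrank_coefmx_eval_mul_gate (W1 _) (W1 _) homP; rewrite !mul1r.
Qed.

End RankOfProducts.

Section GatesAndSubstitution.
Variables (F : fieldType) (n : nat).
Implicit Types (l : linform F n) (P : seq (linform F n)) (Phi : circuit F n).

Lemma lin_poly_dhomog l : l.1 = 0 -> lin_poly l \is 1.-homog.
Proof.
move=> l0; rewrite /lin_poly l0 mpolyC0 add0r.
by apply: rpred_sum => x _; rewrite rpredZ // dhomogX; apply/eqP/mdeg1.
Qed.

Lemma gate_poly_dhomog P :
  all (fun l : linform F n => l.1 == 0) P -> gate_poly P \is (size P).-homog.
Proof.
elim: P => [|l P IH] /=; first by rewrite /gate_poly big_nil dhomog1.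
case/andP => /eqP/lin_poly_dhomog homl /IH homP; rewrite /gate_poly big_cons -add1n.
exact: dhomogM homl homP.
Qed.

Lemma circuit_poly_dhomog_part d Phi :
  homogeneous_circuit Phi -> circuit_poly Phi \is d.-homog ->
  circuit_poly Phi = \sum_(P <- Phi | size P == d) gate_poly P.
Proof.
move=> /allP homPhi homf; rewrite -(pihomog_dE homf) raddf_sum [RHS]big_mkcond /=.
apply: eq_big_seq => P /homPhi/gate_poly_dhomog homP.
by case: eqP homP => [-> /pihomog_dE | /eqP ne /(pihomog_ne0 ne)].
Qed.

Variables (m : nat) (A : 'I_n -> 'I_m).

(* subst_circuit A Phi is convertible to map (map subst_linform) Phi. *)
Definition subst_linform l : linform F m :=
  (l.1, [ffun y : 'I_m => \sum_(x < n | A x == y) l.2 x]).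

Local Notation substA g := (g \mPo [tuple 'X_(A i) | i < n]).

Lemma lin_poly_subst l : lin_poly (subst_linform l) = substA (lin_poly l).
Proof.
rewrite /lin_poly /= raddfD /= comp_mpolyC raddf_sum /=; congr (_ + _).
rewrite (partition_big A predT) //=; apply: eq_bigr => y _.
rewrite ffunE scaler_suml; apply: eq_bigr => x /eqP <-.
by rewrite comp_mpolyZ comp_mpolyXU -tnth_nth tnth_mktuple.
Qed.

Lemma gate_poly_subst P : gate_poly (map subst_linform P) = substA (gate_poly P).
Proof.
by rewrite /gate_poly big_map rmorph_prod; apply: eq_bigr => l _; apply: lin_poly_subst.
Qed.

Lemma circuit_poly_subst_dhomog_part d Phi :
  homogeneous_circuit Phi -> circuit_poly Phi \is d.-homog ->
  circuit_poly (subst_circuit A Phi) =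
    \sum_(P <- Phi | size P == d) gate_poly (map subst_linform P).
Proof.
move=> homPhi /(circuit_poly_dhomog_part homPhi) fE.
have -> : circuit_poly (subst_circuit A Phi) = substA (circuit_poly Phi).
  rewrite /circuit_poly raddf_sum big_map.
  by apply: eq_bigr => P _; apply: gate_poly_subst.
by rewrite fE raddf_sum; apply: eq_bigr => P _; rewrite gate_poly_subst.
Qed.

End GatesAndSubstitution.

Unset Implicit Arguments.
Set Strict Implicit.

Theorem lemma1 (F : fieldType) (n : nat) (Phi : circuit F n) (k d : nat)
    (f : {mpoly F[n]}) :
  homogeneous_circuit Phi ->
  topfanin Phi = k ->
  circuit_poly Phi = f ->
  f \is d.-homog ->
  forall (p q : nat) (A : 'I_n -> 'I_(p + q)) (s : 'I_(p + q) -> F),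
    (\rank (coefmx_eval (circuit_poly (subst_circuit A Phi)) s) <= k * 2 ^ d)%N.
Proof.
move=> homPhi <- <- homf p q A s.
rewrite (circuit_poly_subst_dhomog_part A homPhi homf) coefmx_eval_sum big_seq_cond.
apply: mxrank_sum_le => P /andP[PPhi /eqP <-].
rewrite -(size_map (subst_linform A)); apply: mxrank_coefmx_eval_gate.
rewrite all_map.
by apply/allP => l /(allP (allP homPhi P PPhi)).
Qed.
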